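(* Let $V$ be a real vector space endowed with some topology and $X$ a cone in $V$. Suppose $w\in\mathbb{R}$, $f\in P_X$, and $R$ is a locally nonsatiated total relation on $X$. Then $\mathcal{M}(R,B^w_{f,X})$ is an $X$-antichain included in $\operatorname{bd}(F^w_f)$.
   Context: A cone in $V$ is a subset $X$ with $\lambda X\subseteq X$ for all $\lambda>0$ (possibly empty, need not contain $0$). $V^*$ denotes the continuous linear functionals on $V$. $P_X=\{f\in V^*: f(x)>0\text{ for all }x\in X\setminus\{0\}\}$. $F^w_f=\{v\in V:f(v)\le w\}$ and $B^w_{f,X}=F^w_f\cap X$; $\operatorname{bd}$ denotes topological boundary. For a cone $K$, a set $A$ is a $K$-antichain iff for all distinct $x,y\in A$, $y-x\notin K\cup(-K)$. For a relation $R\subseteq X\times X$, $R(x)=\{t\in X:(t,x)\in R\}$; $R$ is total iff for all $s,t\in X$, $t\in R(s)$ or $s\in R(t)$; $R$ is locally nonsatiated iff $x\in\operatorname{cl}(\{y\in X:y\in R(x)\text{ and }x\notin R(y)\})$ for all $x\in X$ (closure in $V$). For $S\subseteq X$, $m\in S$ is $R$-maximal on $S$ iff for every $s\in S$ with $s\in R(m)$ one has $m\in R(s)$; $\mathcal{M}(R,S)$ is the set of these. *)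

From HB Require Import structures.
From mathcomp Require Import all_boot all_order all_algebra.
From mathcomp Require Import all_classical all_reals all_analysis.
Set Implicit Arguments. Unset Strict Implicit. Unset Printing Implicit Defensive.
Import Order.TTheory GRing.Theory Num.Theory numFieldNormedType.Exports.
Local Open Scope classical_set_scope.
Local Open Scope ring_scope.

(* A real vector space "endowed with some topology": a type carrying both an
   R-module structure and a topology, with NO compatibility assumed. *)

Section Defs.
Context {R : realType} {V : preTopologicalLmodType R}.

Definition is_cone (X : set V) : Prop :=
  forall (l : R) (x : V), 0 < l -> X x -> X (l *: x).

Definition dual_elt (f : V -> R) : Prop :=
  linear_for *%R f /\ continuous f.

Definition P_ (X : set V) : set (V -> R) :=
  [set f | dual_elt f /\ forall x, X x -> x <> 0 -> 0 < f x].

Definition F_ (w : R) (f : V -> R) : set V := [set v | f v <= w].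
Definition B_ (w : R) (f : V -> R) (X : set V) : set V := F_ w f `&` X.

Definition bd (A : set V) : set V := closure A `\` interior A.

Definition K_antichain (K A : set V) : Prop :=
  forall x y, A x -> A y -> x <> y ->
    ~ (K (y - x) \/ [set - k | k in K] (y - x)).

(* relations R ⊆ X × X, encoded as a predicate on pairs;
   Rset Rel x = R(x) = {t ∈ X : (t, x) ∈ R} *)
Definition rel_on (X : set V) (Rel : set (V * V)) : Prop :=
  Rel `<=` X `*` X.
Definition Rset (X : set V) (Rel : set (V * V)) (x : V) : set V :=
  [set t | X t /\ Rel (t, x)].
Definition total_rel (X : set V) (Rel : set (V * V)) : Prop :=
  forall s t, X s -> X t -> Rset X Rel s t \/ Rset X Rel t s.
Definition loc_nonsatiated (X : set V) (Rel : set (V * V)) : Prop :=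
  forall x, X x -> closure [set y | X y /\ Rset X Rel x y /\ ~ Rset X Rel y x] x.
Definition R_maximal (X : set V) (Rel : set (V * V)) (S : set V) (m : V) : Prop :=
  S m /\ forall s, S s -> Rset X Rel m s -> Rset X Rel s m.
Definition Mset (X : set V) (Rel : set (V * V)) (S : set V) : set V :=
  [set m | R_maximal X Rel S m].

End Defs.

From HB Require Import structures.
From mathcomp Require Import all_boot all_order all_algebra.
From mathcomp Require Import all_classical all_reals all_analysis.
Import Order.TTheory GRing.Theory Num.Theory numFieldNormedType.Exports.
Local Open Scope classical_set_scope.
Local Open Scope ring_scope.

(* A maximal element m of B = F `&` X cannot be interior to F: local
   nonsatiation yields a strictly preferred y in X arbitrarily close to m, hence
   in F, hence in B, contradicting maximality. As f is continuous, {f < w} is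
   an open subset of F, so f m = w. All maximal elements thus lie on the
   hyperplane {f = w}, which is an X-antichain because f is strictly positive
   on X minus 0. *)

Section MaximalElements.
Set Implicit Arguments. Unset Strict Implicit.
Context {R : realType} {V : preTopologicalLmodType R}.
Implicit Types (X A : set V) (f : V -> R) (Rel : set (V * V)).

Lemma linear_forB f : linear_for *%R f -> forall x y, f (y - x) = f y - f x.
Proof.
by move=> f_lin x y; rewrite addrC -scaleN1r f_lin mulN1r addrC.
Qed.

Lemma nbhs_F_lt (w : R) f x : continuous f -> f x < w -> nbhs x (F_ w f).
Proof.
move=> f_cont fx_lt_w.
have fx_lt : nbhs (f x) [set r | r < w].
  by apply: open_nbhs_nbhs; split; [exact: open_lt|].
have x_lt : nbhs x (f @^-1` [set r | r < w]) := f_cont x _ fx_lt.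
by apply: (filterS _ x_lt) => v /ltW.
Qed.

Lemma Mset_setIX_not_interior X Rel A m :
  loc_nonsatiated X Rel -> Mset X Rel (A `&` X) m -> ~ interior A m.
Proof.
move=> X_ns [[_ Xm] m_max] Am.
have [y [[Xy [Rym Rmy_n]] Ay]] := X_ns m Xm A Am.
by apply: Rmy_n; apply: m_max.
Qed.

Lemma Mset_B_level X Rel (w : R) f m : continuous f -> loc_nonsatiated X Rel ->
  Mset X Rel (B_ w f X) m -> f m = w.
Proof.
move=> f_cont X_ns m_max; have [[fm_le _] _] := m_max.
apply/eqP; rewrite eq_le fm_le /= leNgt; apply/negP => fm_lt.
exact: (Mset_setIX_not_interior X_ns m_max) (nbhs_F_lt f_cont fm_lt).
Qed.

Lemma level_set_antichain X (w : R) f A : P_ X f ->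
  (forall a, A a -> f a = w) -> K_antichain X A.
Proof.
move=> [[f_lin _] f_pos] A_level.
have notX_diff x y : A x -> A y -> x <> y -> ~ X (y - x).
  move=> Ax Ay xy Xyx.
  have : 0 < f (y - x).
    by apply: f_pos => // /eqP; rewrite subr_eq0 => /eqP yx; apply: xy.
  by rewrite linear_forB // (A_level x) // (A_level y) // subrr ltxx.
move=> x y Ax Ay xy [Xyx|[k Xk k_eq]]; first exact: notX_diff Xyx.
apply: (notX_diff y x Ay Ax) => [yx|]; first exact: xy.
by rewrite -[x - y]opprB -k_eq opprK.
Qed.

End MaximalElements.

Theorem theorem12 (R : realType) (V : preTopologicalLmodType R) (X : set V)
  (w : R) (f : V -> R) (Rel : set (V * V)) :
  is_cone X -> P_ X f ->
  rel_on X Rel -> total_rel X Rel -> loc_nonsatiated X Rel ->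
  K_antichain X (Mset X Rel (B_ w f X)) /\
  Mset X Rel (B_ w f X) `<=` bd (F_ w f).
Proof.
move=> _ f_PX _ _ X_ns; have [[_ f_cont] _] := f_PX.
split; first by apply: (level_set_antichain f_PX) => m; exact: Mset_B_level.
move=> m m_max; split; last exact: Mset_setIX_not_interior m_max.
by apply: subset_closure; case: m_max => -[].
Qed.
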